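(* Let $\mathcal{X}$ and $\mathcal{Y}$ be finite sets, let $\Pr$ be a probability distribution on $\mathcal{X}$, let $\delta:\mathcal{X}\times\mathcal{Y}\to\mathbb{R}$, and let $\bar\pi,\pi_1,\dots,\pi_m$ be stochastic policies, each $\pi_i$ having support for $\bar\pi$ and satisfying $\sigma^2_\delta(\bar\pi\|\pi_i)>0$. Let $\mathcal{D}=\bigcup_{i=1}^m\mathcal{D}^i$ be a log dataset in which, for each $i$, $\mathcal{D}^i$ consists of $n_i\ge1$ samples $(x^i_j,y^i_j,\delta^i_j,p^i_j)$ with $x^i_j\sim\Pr$, $y^i_j\sim\pi_i(\cdot\mid x^i_j)$, $\delta^i_j=\delta(x^i_j,y^i_j)$, $p^i_j=\pi_i(y^i_j\mid x^i_j)$, all draws independent; let $n=\sum_in_i$. Define $$\hat U_{naive}(\bar\pi)=\frac1n\sum_{i=1}^m\sum_{j=1}^{n_i}\frac{\delta^i_j\bar\pi(y^i_j\mid x^i_j)}{p^i_j},\qquad \hat U_{weight}(\bar\pi)=\sum_{i=1}^m\lambda_i^*\sum_{j=1}^{n_i}\frac{\delta^i_j\bar\pi(y^i_j\mid x^i_j)}{p^i_j},$$ where $\lambda_i^*=\Big(\sigma^2_\delta(\bar\pi\|\pi_i)\sum_{j=1}^m\frac{n_j}{\sigma^2_\delta(\bar\pi\|\pi_j)}\Big)^{-1}$. Let $v_i=\sigma^2_\delta(\bar\pi\|\pi_i)/\sigma^2_\delta(\bar\pi\|\pi_m)$ and $r_i=n_i/n_m$. Then $$\gamma:=\frac{\mathrm{Var}_{\mathcal{D}}[\hat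 U_{weight}(\bar\pi)]}{\mathrm{Var}_{\mathcal{D}}[\hat U_{naive}(\bar\pi)]}=\frac{\big(\sum_{i=1}^m r_i\big)^2}{\big(\sum_{i=1}^m r_iv_i\big)\big(\sum_{i=1}^m \frac{r_i}{v_i}\big)}\le1.$$
   Context: A stochastic policy $\pi$ assigns to each $x\in\mathcal{X}$ a probability distribution $\pi(\cdot\mid x)$ on $\mathcal{Y}$. The utility is $U(\pi)=\sum_{x,y}\Pr(x)\pi(y\mid x)\delta(x,y)$. A policy $\pi$ has support for $\pi'$ if $\delta(x,y)\pi'(y\mid x)\neq0$ implies $\pi(y\mid x)>0$ for all $x,y$. For $\pi$ having support for $\bar\pi$, the divergence is $\sigma^2_\delta(\bar\pi\|\pi)=\mathrm{Var}_{x\sim\Pr,\,y\sim\pi(\cdot\mid x)}\big[\delta(x,y)\bar\pi(y\mid x)/\pi(y\mid x)\big]=\sum_{x,y}\frac{(\delta(x,y)\bar\pi(y\mid x))^2}{\pi(y\mid x)}\Pr(x)-U(\bar\pi)^2$. Variances are over the random draw of $\mathcal{D}$. *)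

From HB Require Import structures.
From mathcomp Require Import all_boot all_order all_algebra.
From mathcomp Require Import reals.
Set Implicit Arguments. Unset Strict Implicit. Unset Printing Implicit Defensive.
Import Order.TTheory GRing.Theory Num.Theory.
Local Open Scope ring_scope.

Section Defs.
Variables (R : realType) (X Y : finType).

(* A stochastic policy: pol x y = pi(y | x). *)
Definition is_policy (pol : X -> Y -> R) : Prop :=
  (forall x y, 0 <= pol x y) /\ (forall x, \sum_(y : Y) pol x y = 1).

Definition is_distr (Pr : X -> R) : Prop :=
  (forall x, 0 <= Pr x) /\ \sum_(x : X) Pr x = 1.

Definition utility (Pr : X -> R) (delta : X -> Y -> R) (pol : X -> Y -> R) : R :=
  \sum_(x : X) \sum_(y : Y) Pr x * pol x y * delta x y.

Definition has_support (delta : X -> Y -> R) (pol pol' : X -> Y -> R) : Prop :=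
  forall x y, delta x y * pol' x y != 0 -> 0 < pol x y.

Definition divergence (Pr : X -> R) (delta : X -> Y -> R)
    (pbar pol : X -> Y -> R) : R :=
  \sum_(x : X) \sum_(y : Y) (delta x y * pbar x y) ^+ 2 / pol x y * Pr x
  - utility Pr delta pbar ^+ 2.

Definition sidx (m : nat) (n : 'I_m -> nat) : finType := {i : 'I_m & 'I_(n i)}.

(* A log dataset: the (x, y) drawn for each sample (i,j); delta^i_j and p^i_j
   are determined by (x, y) and i. *)
Definition dataset (m : nat) (n : 'I_m -> nat) : finType :=
  {ffun sidx n -> (X * Y)%type}.

Definition sample (m : nat) (n : 'I_m -> nat) (d : dataset n) (i : 'I_m)
  (j : 'I_(n i)) : X * Y := d (existT (fun i => 'I_(n i)) i j).

Definition prob_dataset (m : nat) (n : 'I_m -> nat) (Pr : X -> R)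
    (pol : 'I_m -> X -> Y -> R) (d : dataset n) : R :=
  \prod_(k : sidx n) (Pr (d k).1 * pol (tag k) (d k).1 (d k).2).

Definition expect (m : nat) (n : 'I_m -> nat) (Pr : X -> R)
    (pol : 'I_m -> X -> Y -> R) (f : dataset n -> R) : R :=
  \sum_(d : dataset n) prob_dataset Pr pol d * f d.

Definition variance (m : nat) (n : 'I_m -> nat) (Pr : X -> R)
    (pol : 'I_m -> X -> Y -> R) (f : dataset n -> R) : R :=
  expect Pr pol (fun d => (f d - expect Pr pol f) ^+ 2).

Definition ips_term (m : nat) (n : 'I_m -> nat) (delta : X -> Y -> R)
    (pbar : X -> Y -> R) (pol : 'I_m -> X -> Y -> R) (d : dataset n)
    (i : 'I_m) (j : 'I_(n i)) : R :=
  let s := sample d j in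
  delta s.1 s.2 * pbar s.1 s.2 / pol i s.1 s.2.

Definition U_naive (m : nat) (n : 'I_m -> nat) (delta : X -> Y -> R)
    (pbar : X -> Y -> R) (pol : 'I_m -> X -> Y -> R) (d : dataset n) : R :=
  (\sum_(i < m) (n i)%:R)^-1 *
  \sum_(i < m) \sum_(j < n i) ips_term delta pbar pol d j.

Definition lambda_star (m : nat) (n : 'I_m -> nat) (Pr : X -> R)
    (delta : X -> Y -> R) (pbar : X -> Y -> R) (pol : 'I_m -> X -> Y -> R)
    (i : 'I_m) : R :=
  (divergence Pr delta pbar (pol i) *
   \sum_(j < m) (n j)%:R / divergence Pr delta pbar (pol j))^-1.

Definition U_weight (m : nat) (n : 'I_m -> nat) (Pr : X -> R)
    (delta : X -> Y -> R) (pbar : X -> Y -> R) (pol : 'I_m -> X -> Y -> R)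
    (d : dataset n) : R :=
  \sum_(i < m) lambda_star n Pr delta pbar pol i *
    \sum_(j < n i) ips_term delta pbar pol d j.

End Defs.

Arguments U_naive {R X Y m} n delta pbar pol d.
Arguments U_weight {R X Y m} n Pr delta pbar pol d.
Arguments variance {R X Y m} n Pr pol f.
Arguments expect {R X Y m} n Pr pol f.

(* Both estimators are linear combinations of independent importance weights
   delta pbar / pi_i, each unbiased for U(pbar) with variance sigma_i^2 when
   drawn from Pr x pi_i.  By Bienaymé, Var[U_naive] = (sum_i n_i sigma_i^2) / n^2,
   and the choice of lambda^* gives Var[U_weight] = 1 / (sum_i n_i / sigma_i^2).
   Their ratio is unchanged when n_i and sigma_i^2 are rescaled to r_i and v_i,
   and it is at most 1 by the weighted AM-HM inequality
   (sum w)^2 <= (sum w s) (sum w / s), a sum of squares by Lagrange's identity. *)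

From mathcomp Require Import all_boot all_order all_algebra.
From mathcomp Require Import reals ring lra.
Import Order.TTheory GRing.Theory Num.Theory.
Set Implicit Arguments.
Unset Strict Implicit.
Unset Printing Implicit Defensive.
Local Open Scope ring_scope.

Section Moments.
Variables (R : comNzRingType) (J : finType).
Implicit Types (q g : J -> R).

Definition mean q g : R := \sum_j q j * g j.

Definition var q g : R := mean q (fun j => (g j - mean q g) ^+ 2).

Lemma meanZ q c g : mean q (fun j => c * g j) = c * mean q g.
Proof. by rewrite /mean mulr_sumr; apply: eq_bigr => j _; rewrite mulrCA. Qed.

Lemma varZ q c g : var q (fun j => c * g j) = c ^+ 2 * var q g.
Proof.
rewrite /var meanZ -[in RHS]meanZ; apply: eq_bigr => j _.
by rewrite -mulrBr exprMn.
Qed.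

Variable q : J -> R.
Hypothesis q1 : \sum_j q j = 1.

Lemma mean_cst c : mean q (fun=> c) = c.
Proof. by rewrite /mean -mulr_suml q1 mul1r. Qed.

Lemma mean_centered g : mean q (fun j => g j - mean q g) = 0.
Proof.
rewrite /mean; under eq_bigr do rewrite mulrBr.
by rewrite sumrB -/(mean q g) -/(mean q (fun=> mean q g)) mean_cst subrr.
Qed.

Lemma varE g : var q g = mean q (fun j => g j ^+ 2) - mean q g ^+ 2.
Proof.
rewrite /var; set mu := mean q g.
have expand j : q j * (g j - mu) ^+ 2 = q j * g j ^+ 2 - (2 * mu) * (q j * g j) + mu ^+ 2 * q j.
  by ring.
rewrite /mean; under eq_bigr do rewrite expand.
by rewrite big_split sumrB /= -!mulr_sumr q1 -/(mean q g) -/mu; ring.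
Qed.

End Moments.

Section ProductExpectation.
Variables (R : comNzRingType) (I J : finType) (p : I -> J -> R).

Definition prod_expect (F : {ffun I -> J} -> R) : R :=
  \sum_(f : {ffun I -> J}) (\prod_i p i (f i)) * F f.

Lemma eq_prod_expect F G : F =1 G -> prod_expect F = prod_expect G.
Proof. by move=> FG; apply: eq_bigr => f _; rewrite FG. Qed.

Lemma prod_expect_sum (K : finType) (F : K -> {ffun I -> J} -> R) :
  prod_expect (fun f => \sum_k F k f) = \sum_k prod_expect (F k).
Proof.
by rewrite /prod_expect; under eq_bigr do rewrite mulr_sumr; apply: exchange_big.
Qed.

Hypothesis p1 : forall i, \sum_j p i j = 1.

Lemma prod_expect_prod (A : {set I}) (h : I -> J -> R) :
  prod_expect (fun f => \prod_(i in A) h i (f i)) = \prod_(i in A) mean (p i) (h i).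
Proof.
pose hA i j := if i \in A then h i j else 1.
transitivity (\prod_i mean (p i) (hA i)); last first.
  rewrite [RHS]big_mkcond; apply: eq_bigr => i _; rewrite /hA.
  by case: ifP => // _; apply: mean_cst.
rewrite /mean bigA_distr_bigA; apply: eq_bigr => f _.
rewrite big_split; congr (_ * _).
by rewrite [LHS]big_mkcond; apply: eq_bigr => i _; rewrite /hA; case: ifP.
Qed.

Lemma prod_expect_coord k (h : J -> R) :
  prod_expect (fun f => h (f k)) = mean (p k) h.
Proof.
transitivity (prod_expect (fun f => \prod_(i in [set k]) h (f i))).
  by apply: eq_prod_expect => f; rewrite big_set1.
by rewrite (prod_expect_prod _ (fun=> h)) big_set1.
Qed.

Lemma prod_expect_coord2 k l (h g : J -> R) : k != l ->
  prod_expect (fun f => h (f k) * g (f l)) = mean (p k) h * mean (p l) g.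
Proof.
move=> kl; pose hg i := if i == k then h else g.
have prod2 (F : I -> R) : \prod_(i in [set k; l]) F i = F k * F l.
  by rewrite big_setU1 ?big_set1 // inE.
have hgl : hg l = g by rewrite /hg eq_sym (negbTE kl).
transitivity (prod_expect (fun f => \prod_(i in [set k; l]) hg i (f i))).
  by apply: eq_prod_expect => f; rewrite prod2 hgl /hg eqxx.
by rewrite prod_expect_prod prod2 hgl /hg eqxx.
Qed.

Lemma prod_expect_sum_coord (g : I -> J -> R) :
  prod_expect (fun f => \sum_i g i (f i)) = \sum_i mean (p i) (g i).
Proof. by rewrite prod_expect_sum; apply: eq_bigr => i _; apply: prod_expect_coord. Qed.

(* Bienaymé: cross terms of independent centred coordinates vanish. *)
Lemma prod_var_sum_coord (g : I -> J -> R) :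
  prod_expect (fun f => (\sum_i g i (f i) - prod_expect (fun f => \sum_i g i (f i))) ^+ 2)
  = \sum_i var (p i) (g i).
Proof.
rewrite prod_expect_sum_coord.
pose h i j := g i j - mean (p i) (g i).
have h0 i : mean (p i) (h i) = 0 := mean_centered (p1 i) (g i).
have expand f : (\sum_i g i (f i) - \sum_i mean (p i) (g i)) ^+ 2 =
                \sum_i \sum_l h i (f i) * h l (f l).
  by rewrite -sumrB expr2 big_distrlr.
rewrite (eq_prod_expect expand) prod_expect_sum; apply: eq_bigr => i _.
rewrite prod_expect_sum (bigD1 i) //= big1 ?addr0 => [|l li].
  rewrite (prod_expect_coord i (fun j => h i j * h i j)).
  by apply: eq_bigr => j _; rewrite expr2.
by rewrite prod_expect_coord2 1?eq_sym // h0 mul0r.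
Qed.

End ProductExpectation.

Lemma psumr_gt0 (R : realDomainType) (I : finType) (i0 : I) (F : I -> R) :
  (forall i, 0 < F i) -> 0 < \sum_i F i.
Proof.
move=> F0; rewrite (bigD1 i0) //=.
have : 0 <= \sum_(i | i != i0) F i by apply: sumr_ge0 => i _; apply: ltW.
by have := F0 i0; lra.
Qed.

Lemma weighted_am_hm (R : realFieldType) (I : finType) (w s : I -> R) :
  (forall i, 0 <= w i) -> (forall i, 0 < s i) ->
  (\sum_i w i) ^+ 2 <= (\sum_i w i * s i) * (\sum_i w i / s i).
Proof.
move=> w0 s0.
set A := \sum_i w i * s i; set S := \sum_i w i / s i.
have AS1 : A * S = \sum_i \sum_j (w i * s i) * (w j / s j) by rewrite big_distrlr.
have AS2 : A * S = \sum_i \sum_j (w i / s i) * (w j * s j) by rewrite mulrC big_distrlr.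
have N2 : (\sum_i w i) ^+ 2 = \sum_i \sum_j w i * w j by rewrite expr2 big_distrlr.
have lagrange : \sum_i \sum_j w i * w j * (s i - s j) ^+ 2 / (s i * s j) =
                A * S + A * S - 2 * (\sum_i w i) ^+ 2.
  rewrite {1}AS1 AS2 N2 -big_split /= mulr_sumr -sumrB; apply: eq_bigr => i _.
  rewrite -big_split /= mulr_sumr -sumrB; apply: eq_bigr => j _.
  by field; rewrite !lt0r_neq0 //; apply: s0.
have : 0 <= \sum_i \sum_j w i * w j * (s i - s j) ^+ 2 / (s i * s j).
  apply: sumr_ge0 => i _; apply: sumr_ge0 => j _.
  apply: divr_ge0; last by apply: mulr_ge0; apply: ltW.
  by rewrite mulr_ge0 ?sqr_ge0 ?mulr_ge0.
by rewrite lagrange; lra.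
Qed.

Lemma am_hm_ratio_scale (R : fieldType) (I : finType) (w s : I -> R) (a b : R) :
  a != 0 -> b != 0 ->
  (\sum_i w i / a) ^+ 2 / ((\sum_i w i / a * (s i / b)) * (\sum_i w i / a / (s i / b)))
  = (\sum_i w i) ^+ 2 / ((\sum_i w i * s i) * (\sum_i w i / s i)).
Proof.
move=> a0 b0.
have sumN : \sum_i w i / a = (\sum_i w i) / a by rewrite mulr_suml.
have sumA : \sum_i w i / a * (s i / b) = (\sum_i w i * s i) / (a * b).
  by rewrite mulr_suml; apply: eq_bigr => i _; rewrite invfM; ring.
have sumS : \sum_i w i / a / (s i / b) = (\sum_i w i / s i) * (b / a).
  by rewrite mulr_suml; apply: eq_bigr => i _; rewrite invf_div; ring.
have den : (\sum_i w i * s i) / (a * b) * ((\sum_i w i / s i) * (b / a)) =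
           (\sum_i w i * s i) * (\sum_i w i / s i) / a ^+ 2.
  by field; rewrite a0 b0.
by rewrite sumN sumA sumS den expr_div_n invf_div mulrA divfK // expf_neq0.
Qed.

Section ImportanceSampling.
Variables (R : realType) (X Y : finType).
Variables (Pr : X -> R) (delta pbar pol : X -> Y -> R).

Definition sample_prob (z : X * Y) : R := Pr z.1 * pol z.1 z.2.

Definition ips_weight (z : X * Y) : R := delta z.1 z.2 * pbar z.1 z.2 / pol z.1 z.2.

Lemma sample_prob_sum1 : is_distr Pr -> is_policy pol -> \sum_z sample_prob z = 1.
Proof.
move=> [_ Pr1] [_ pol1]; rewrite -(pair_bigA _ (fun x y => Pr x * pol x y)) /=.
by under eq_bigr do rewrite -mulr_sumr pol1 mulr1.
Qed.

(* Where [pol] vanishes, so does [delta * pbar], by [has_support]. *)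
Lemma mean_ips_weight :
  has_support delta pol pbar -> mean sample_prob ips_weight = utility Pr delta pbar.
Proof.
move=> supp; rewrite /mean -(pair_bigA _ (fun x y => sample_prob (x, y) * ips_weight (x, y))).
apply: eq_bigr => x _; apply: eq_bigr => y _; rewrite /sample_prob /ips_weight /=.
have [pol0|pol_neq0] := eqVneq (pol x y) 0; last by field.
have [dp0|dp_neq0] := eqVneq (delta x y * pbar x y) 0.
  by rewrite dp0 mul0r mulr0 -mulrA [pbar x y * _]mulrC dp0 mulr0.
by have := supp x y dp_neq0; rewrite pol0 ltxx.
Qed.

(* No support hypothesis is needed: where [pol] vanishes both sides do, as [0^-1 = 0]. *)
Lemma mean_ips_weight_sqr :
  mean sample_prob (fun z => ips_weight z ^+ 2) =
  \sum_x \sum_y (delta x y * pbar x y) ^+ 2 / pol x y * Pr x.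
Proof.
rewrite /mean -(pair_bigA _ (fun x y => sample_prob (x, y) * ips_weight (x, y) ^+ 2)).
apply: eq_bigr => x _; apply: eq_bigr => y _; rewrite /sample_prob /ips_weight /=.
have [->|pol_neq0] := eqVneq (pol x y) 0; first by rewrite invr0; ring.
by field.
Qed.

Lemma var_ips_weight : is_distr Pr -> is_policy pol -> has_support delta pol pbar ->
  var sample_prob ips_weight = divergence Pr delta pbar pol.
Proof.
move=> hPr hpol supp.
by rewrite varE ?sample_prob_sum1 // mean_ips_weight_sqr mean_ips_weight.
Qed.

End ImportanceSampling.

Section LogDataset.
Variables (R : realType) (X Y : finType) (m : nat) (n : 'I_m -> nat).
Variables (Pr : X -> R) (delta pbar : X -> Y -> R) (pol : 'I_m -> X -> Y -> R).
Hypotheses (hPr : is_distr Pr) (hpol : forall i, is_policy (pol i))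
  (hsupp : forall i, has_support delta (pol i) pbar).

Lemma sum_sidx (G : sidx n -> R) :
  \sum_(i < m) \sum_(j < n i) G (existT _ i j) = \sum_(k : sidx n) G k.
Proof. by rewrite (sig_big_dep xpredT (fun _ => xpredT)); apply: eq_bigr => -[]. Qed.

Lemma sum_sidx_tag (F : 'I_m -> R) : \sum_(k : sidx n) F (tag k) = \sum_i (n i)%:R * F i.
Proof.
by rewrite -sum_sidx; apply: eq_bigr => i _ /=; rewrite sumr_const card_ord mulr_natl.
Qed.

Lemma expect_prod (F : dataset X Y n -> R) :
  expect n Pr pol F = prod_expect (fun k => sample_prob Pr (pol (tag k))) F.
Proof. by []. Qed.

Lemma eq_variance (F G : dataset X Y n -> R) : F =1 G ->
  variance n Pr pol F = variance n Pr pol G.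
Proof.
move=> FG; rewrite /variance !expect_prod (eq_prod_expect _ FG).
by apply: eq_prod_expect => d; rewrite FG.
Qed.

Lemma variance_ips_combination (c : 'I_m -> R) :
  variance n Pr pol (fun d => \sum_i c i * \sum_(j < n i) ips_term delta pbar pol d j)
  = \sum_i (n i)%:R * (c i ^+ 2 * divergence Pr delta pbar (pol i)).
Proof.
pose g (k : sidx n) z := c (tag k) * ips_weight delta pbar (pol (tag k)) z.
rewrite (eq_variance (G := fun d => \sum_k g k (d k))); last first.
  by move=> d; rewrite -sum_sidx; apply: eq_bigr => i _; rewrite mulr_sumr.
rewrite /variance !expect_prod prod_var_sum_coord => [|k]; last first.
  exact: sample_prob_sum1.
rewrite -sum_sidx_tag; apply: eq_bigr => k _.
by rewrite varZ var_ips_weight.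
Qed.

Lemma variance_U_naive :
  variance n Pr pol (U_naive n delta pbar pol) =
  (\sum_i (n i)%:R * divergence Pr delta pbar (pol i)) / (\sum_i (n i)%:R) ^+ 2.
Proof.
set N := \sum_i (n i)%:R.
rewrite (eq_variance (G := fun d => \sum_i N^-1 * \sum_(j < n i) ips_term delta pbar pol d j)).
  rewrite variance_ips_combination mulrC mulr_sumr exprVn.
  by apply: eq_bigr => i _; rewrite mulrCA.
by move=> d; rewrite /U_naive mulr_sumr.
Qed.

Lemma variance_U_weight : (forall i, divergence Pr delta pbar (pol i) != 0) ->
  variance n Pr pol (U_weight n Pr delta pbar pol) =
  (\sum_i (n i)%:R / divergence Pr delta pbar (pol i))^-1.
Proof.
move=> div_neq0; rewrite [LHS](variance_ips_combination (lambda_star n Pr delta pbar pol)).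
rewrite /lambda_star; set S := \sum_(j < m) (n j)%:R / divergence Pr delta pbar (pol j).
have [->|S0] := eqVneq S 0.
  by rewrite invr0; apply: big1 => i _; rewrite mulr0 invr0 expr0n mul0r mulr0.
transitivity (\sum_i (n i)%:R / divergence Pr delta pbar (pol i) / S ^+ 2).
  by apply: eq_bigr => i _; field; rewrite S0 div_neq0.
by rewrite -mulr_suml -/S; field.
Qed.

End LogDataset.

Theorem proposition6p5 (R : realType) (X Y : finType) (m : nat)
  (n : 'I_m.+1 -> nat) (Pr : X -> R) (delta : X -> Y -> R)
  (pbar : X -> Y -> R) (pol : 'I_m.+1 -> X -> Y -> R) :
  is_distr Pr -> is_policy pbar ->
  (forall i, is_policy (pol i)) ->
  (forall i, has_support delta (pol i) pbar) ->
  (forall i, 0 < divergence Pr delta pbar (pol i)) ->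
  (forall i, (0 < n i)%N) ->
  let v i := divergence Pr delta pbar (pol i) /
             divergence Pr delta pbar (pol ord_max) in
  let r i := (n i)%:R / (n ord_max)%:R : R in
  let gamma := variance n Pr pol (U_weight n Pr delta pbar pol) /
               variance n Pr pol (U_naive n delta pbar pol) in
  gamma = (\sum_(i < m.+1) r i) ^+ 2 /
          ((\sum_(i < m.+1) r i * v i) * (\sum_(i < m.+1) r i / v i))
  /\ gamma <= 1.
Proof.
move=> hPr _ hpol hsupp div_gt0 n_gt0 v r gamma.
have div_neq0 i : divergence Pr delta pbar (pol i) != 0 := lt0r_neq0 (div_gt0 i).
have gammaE : gamma = (\sum_i (n i)%:R) ^+ 2 /
    ((\sum_i (n i)%:R * divergence Pr delta pbar (pol i)) *
     (\sum_i (n i)%:R / divergence Pr delta pbar (pol i))).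
  by rewrite /gamma variance_U_weight // variance_U_naive // invf_div invfM; ring.
split.
  by rewrite gammaE /r /v /= am_hm_ratio_scale // pnatr_eq0 -lt0n.
rewrite gammaE ler_pdivrMr ?mul1r.
  by apply: weighted_am_hm => i //; rewrite ler0n.
apply: mulr_gt0; apply: (psumr_gt0 ord0) => i;
  [apply: mulr_gt0 | apply: divr_gt0]; by rewrite ?ltr0n ?n_gt0 ?div_gt0.
Qed.
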